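(* Let $n = 2g+2$ for an integer $g\ge 0$, and let $\mathcal{J}[2]$ be the $S_n$-module of subsets of $\{1,\dots,n\}$ modulo complements, with group law induced by symmetric difference and $S_n$ acting by permuting $\{1,\dots,n\}$. Then $H^1_*(S_n,\mathcal{J}[2]) = 0$.
   Context: For a finite group $G$ and $G$-module $M$, $H^1_*(G,M) := \ker\big(H^1(G,M)\to\prod_{g\in G}H^1(\langle g\rangle,M)\big)$, the map being the product of restrictions to cyclic subgroups. *)

From mathcomp Require Import all_boot all_fingroup.
Set Implicit Arguments. Unset Strict Implicit. Unset Printing Implicit Defensive.

(* An element of J[2] is represented by any subset A : {set 'I_n}; two
   representatives denote the same element iff they are equal or complementary. *)

Section J2.
Variable n : nat.

Definition symdiff (A B : {set 'I_n}) : {set 'I_n} := (A :\: B) :|: (B :\: A).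

Definition J2eq (A B : {set 'I_n}) : bool := (A == B) || (A == ~: B).

(* MathComp composes permutations left-to-right ((s * t) x = t (s x)),
   so this is a right action: act (act A s) t = act A (s * t). *)
Definition J2act (A : {set 'I_n}) (s : {perm 'I_n}) : {set 'I_n} := s @: A.

Definition J2cocycle (G : {set {perm 'I_n}}) (f : {perm 'I_n} -> {set 'I_n}) : Prop :=
  forall s t, s \in G -> t \in G ->
    J2eq (f (s * t)%g) (symdiff (J2act (f s) t) (f t)).

Definition J2coboundary_on (H : {set {perm 'I_n}}) (f : {perm 'I_n} -> {set 'I_n}) : Prop :=
  exists A : {set 'I_n}, forall h, h \in H -> J2eq (f h) (symdiff (J2act A h) A).

Definition H1star_J2_trivial (G : {set {perm 'I_n}}) : Prop :=
  forall f : {perm 'I_n} -> {set 'I_n},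
    J2cocycle G f ->
    (forall g, g \in G -> J2coboundary_on <[g]>%g f) ->
    J2coboundary_on G f.

End J2.

From mathcomp Require Import all_boot all_fingroup.
Set Implicit Arguments. Unset Strict Implicit. Unset Printing Implicit Defensive.
Local Open Scope group_scope.

(* Fix a point x0.  For a transposition t = (x0 i), the restriction of a
   cocycle f to <[t]> is a coboundary, so f t is either 0 or {x0, i} in J[2].
   Let A be the set of those i for which f (x0 i) is {x0, i}; then f agrees with
   the coboundary of A on every transposition (x0 i).  The permutations on which
   f and the coboundary of A agree form a subgroup, and the transpositions
   (x0 i) generate S_n. *)

Section J2Module.
Variable n : nat.
Implicit Types (A B C : {set 'I_n}) (s t : {perm 'I_n}).

Lemma in_symdiff A B x : (x \in symdiff A B) = (x \in A) (+) (x \in B).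
Proof. by rewrite /symdiff !inE; case: (x \in A); case: (x \in B). Qed.

Lemma in_J2act A s x : (x \in J2act A s) = ((s^-1) x \in A).
Proof.
rewrite /J2act; apply/imsetP/idP => [[y yA ->]|xA]; first by rewrite permK.
by exists ((s^-1) x); rewrite ?permKV.
Qed.

Lemma J2eqP A B :
  reflect (exists b, forall x, (x \in A) = (x \in B) (+) b) (J2eq A B).
Proof.
apply: (iffP orP) => [[/eqP->|/eqP->]|[[] AB]].
- by exists false => x; rewrite addbF.
- by exists true => x; rewrite addbT inE.
- by right; apply/eqP/setP => x; rewrite AB addbT inE.
- by left; apply/eqP/setP => x; rewrite AB addbF.
Qed.

Lemma J2eq_trans A B C : J2eq A B -> J2eq B C -> J2eq A C.
Proof.
move=> /J2eqP[b AB] /J2eqP[c BC]; apply/J2eqP; exists (c (+) b) => x.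
by rewrite AB BC addbA.
Qed.

Lemma J2eq_symdiff A A' B B' :
  J2eq A A' -> J2eq B B' -> J2eq (symdiff A B) (symdiff A' B').
Proof.
move=> /J2eqP[b AA'] /J2eqP[c BB']; apply/J2eqP; exists (b (+) c) => x.
by rewrite !in_symdiff AA' BB' addbACA.
Qed.

Lemma J2eq_act A A' s : J2eq A A' -> J2eq (J2act A s) (J2act A' s).
Proof. by move=> /J2eqP[b AA']; apply/J2eqP; exists b => x; rewrite !in_J2act. Qed.

Definition J2cob A s := symdiff (J2act A s) A.

Lemma J2cobM A s t :
  J2cob A (s * t) = symdiff (J2act (J2cob A s) t) (J2cob A t).
Proof.
apply/setP => x; rewrite /J2cob !(in_symdiff, in_J2act) invMg permM.
by rewrite addbA addbK.
Qed.

Lemma J2cob1 A : J2cob A 1 = set0.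
Proof. by apply/setP => x; rewrite in_symdiff in_J2act invg1 perm1 addbb inE. Qed.

Lemma J2cob_tperm A x y : x != y ->
  J2cob A (tperm x y) = if (x \in A) (+) (y \in A) then [set x; y] else set0.
Proof.
move=> xy; apply/setP => z; rewrite in_symdiff in_J2act tpermV.
case: ifP => AxAy; rewrite !inE; case: tpermP => [->|->|/eqP zx /eqP zy].
all: by rewrite ?eqxx ?orbT ?(negbTE zx, negbTE zy, addbb) // addbC AxAy.
Qed.

Lemma J2coboundary_tperm (f : {perm 'I_n} -> {set 'I_n}) x y :
  x != y -> J2coboundary_on <[tperm x y]> f ->
  J2eq (f (tperm x y)) set0 || J2eq (f (tperm x y)) [set x; y].
Proof.
move=> xy [B fB]; have := fB _ (cycle_id _); rewrite -/(J2cob B _) J2cob_tperm //.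
by case: ifP => _ ->; rewrite ?orbT.
Qed.

Definition J2agree (f : {perm 'I_n} -> {set 'I_n}) A :=
  [set s | J2eq (f s) (J2cob A s)].

Section Cocycle.
Variable f : {perm 'I_n} -> {set 'I_n}.
Hypothesis f_cocycle : J2cocycle [set: {perm 'I_n}] f.

Lemma J2cocycle1 : J2eq (f 1) set0.
Proof.
have /J2eqP[b f1] := f_cocycle (in_setT 1) (in_setT 1).
apply/J2eqP; exists b => x.
by rewrite mulg1 in f1; rewrite f1 in_symdiff in_J2act invg1 perm1 addbb inE.
Qed.

Lemma group_set_J2agree A : group_set (J2agree f A).
Proof.
apply/group_setP; split=> [|s t]; first by rewrite inE J2cob1 J2cocycle1.
rewrite !inE => fs ft; apply: J2eq_trans (f_cocycle (in_setT s) (in_setT t)) _.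
by rewrite J2cobM; apply: J2eq_symdiff => //; apply: J2eq_act.
Qed.

End Cocycle.

End J2Module.

Theorem H1star_J2_trivial_Sym n : H1star_J2_trivial [set: {perm 'I_n}].
Proof.
case: n => [|n] f f_cocycle f_cyc.
  by exists set0 => h _; apply/orP; left; apply/eqP/setP => -[].
pose x0 : 'I_n.+1 := ord0.
pose A := [set i | ~~ J2eq (f (tperm x0 i)) set0].
exists A => h _; have agreeG := group_set_J2agree f_cocycle A.
suff /subsetP/(_ h (in_setT h)) : [set: {perm 'I_n.+1}] \subset J2agree f A.
  by rewrite inE.
rewrite -(gen_tperm x0) (@gen_subG _ _ (Group agreeG)).
apply/subsetP => _ /imsetP[i _ ->]; rewrite inE.
have [<-|x0i] := eqVneq x0 i; first by rewrite tperm1 J2cob1 J2cocycle1.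
have x0A : x0 \notin A by rewrite inE tperm1 J2cocycle1.
rewrite J2cob_tperm // (negbTE x0A) /= inE.
have := J2coboundary_tperm x0i (f_cyc _ (in_setT _)).
by case: (boolP (J2eq _ set0)) => /= [->|_ ->].
Qed.

Theorem lemma2 (g : nat) :
  H1star_J2_trivial [set: {perm 'I_(2 * g + 2)}].
Proof. exact: H1star_J2_trivial_Sym. Qed.
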